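(* Let $d\ge3$, let $P$ be a probability measure on $\mathbb{R}^d$ and $f\in L^2(P)$. Suppose: (i) there is $\bar c>0$ such that for every $m\in\mathbb N$ and every two-layer network $f_m({\bm x})=\sum_{i=1}^m a_i\sigma({\bm w}_i^T\tilde{\bm x})$ with $m$ neurons, $\|f-f_m\|_{L^2(P)}\ge\bar c\,m^{-1/(d-1)}$; (ii) there is $C>0$ such that for every Barron function $g$ and every $m\in\mathbb N$ there is a two-layer network $f_m$ with $m$ neurons satisfying $\|g-f_m\|_{L^2(P)}\le C\|g\|_{\mathcal B}/\sqrt m$. Then there is a constant $c_d>0$ depending only on $\bar c$, $C$ and $d$ such that for every $\varepsilon\in(0,\bar c/4]$ and every Barron function $\tilde f$ with $\|f-\tilde f\|_{L^2(P)}<\varepsilon$, \[ \|\tilde f\|_{\mathcal B}\ge c_d\,\varepsilon^{-\frac{d-3}{2}}. \]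
   Context: $\sigma(z)=\max(z,0)$, $\tilde{\bm x}=({\bm x}^T,1)^T$. A Barron function is $g({\bm x})=\mathbb{E}_{(a,{\bm w})\sim\rho}[a\sigma({\bm w}^T\tilde{\bm x})]$ for a probability measure $\rho$ on $\mathbb{R}\times\mathbb{R}^{d+1}$ with finite $\mathbb{E}_\rho[|a|\|{\bm w}\|_1]$; its Barron norm $\|g\|_{\mathcal B}$ is the infimum of $\mathbb{E}_\rho[|a|\|{\bm w}\|_1]$ over all such representations. *)

From HB Require Import structures.
From mathcomp Require Import all_boot all_order all_algebra.
From mathcomp Require Import all_classical all_reals all_analysis.
Set Implicit Arguments. Unset Strict Implicit. Unset Printing Implicit Defensive.
Import Order.TTheory GRing.Theory Num.Theory.
Import numFieldNormedType.Exports.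
Local Open Scope classical_set_scope.
Local Open Scope ring_scope.

Definition Rvec (R : realType) (n : nat) := g_sigma_algebraType (@open 'rV[R]_n).

Definition relu (R : realType) (z : R) : R := Num.max z 0.

Definition xtilde (R : realType) (d : nat) (x : 'rV[R]_d) : 'rV[R]_(d + 1) :=
  row_mx x (const_mx 1).

Definition wdot (R : realType) (d : nat) (w : 'rV[R]_(d + 1)) (x : 'rV[R]_d) : R :=
  \sum_(i < d + 1) w ord0 i * xtilde x ord0 i.

Definition norm1 (R : realType) (n : nat) (w : 'rV[R]_n) : R :=
  \sum_(i < n) `|w ord0 i|.

Definition network (R : realType) (d m : nat) (a : 'I_m -> R)
  (W : 'I_m -> 'rV[R]_(d + 1)) (x : Rvec R d) : R :=
  \sum_(i < m) a i * relu (wdot (W i) x).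

Definition is_network (R : realType) (d m : nat) (g : Rvec R d -> R) : Prop :=
  exists (a : 'I_m -> R) (W : 'I_m -> 'rV[R]_(d + 1)), g = network a W.

Definition param_space (R : realType) (d : nat) := (R * Rvec R (d + 1))%type.

Definition barron_cost (R : realType) (d : nat)
  (rho : probability (param_space R d) R) : \bar R :=
  (\int[rho]_z (`|z.1| * norm1 z.2)%:E)%E.

Definition barron_rep (R : realType) (d : nat) (g : Rvec R d -> R)
  (rho : probability (param_space R d) R) : Prop :=
  (barron_cost rho < +oo)%E /\
  forall x : Rvec R d, (g x)%:E = (\int[rho]_z (z.1 * relu (wdot z.2 x))%:E)%E.

Definition is_barron (R : realType) (d : nat) (g : Rvec R d -> R) : Prop :=
  exists rho : probability (param_space R d) R, barron_rep g rho.

Definition barron_norm (R : realType) (d : nat) (g : Rvec R d -> R) : \bar R :=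
  ereal_inf [set barron_cost rho | rho in [set rho | barron_rep g rho]].

Definition L2dist (R : realType) (d : nat) (P : probability (Rvec R d) R)
  (f g : Rvec R d -> R) : \bar R :=
  Lnorm P 2%:E (fun x => (f x - g x)%:E).

Definition inL2 (R : realType) (d : nat) (P : probability (Rvec R d) R)
  (f : Rvec R d -> R) : Prop :=
  measurable_fun setT f /\ (Lnorm P 2%:E (fun x => (f x)%:E) < +oo)%E.

From HB Require Import structures.
From mathcomp Require Import all_boot all_order all_algebra.
From mathcomp Require Import all_classical all_reals all_analysis.
From mathcomp Require Import measurable_realfun lra.
Import Order.TTheory GRing.Theory Num.Theory.
Import numFieldNormedType.Exports.
Local Open Scope classical_set_scope.
Local Open Scope ring_scope.

(* Put y = cbar / (2 eps) (so y >= 2) and take the width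
   m = floor (y ^ (d - 1)).  Since m <= y ^ (d - 1), hypothesis (i) gives
   || f - f_m || >= cbar m ^ (-1/(d-1)) >= cbar / y = 2 eps for every network
   f_m with m neurons.  Let f_m be the network that (ii) provides for the
   Barron function ft.  By Minkowski's inequality
     2 eps <= || f - ft || + || ft - f_m || < eps + C ||ft||_B / sqrt m,
   hence eps sqrt m < C ||ft||_B; and y ^ (d - 1) < m + 1 <= 2 m gives
   eps sqrt m >= eps sqrt (y ^ (d - 1)) / sqrt 2
             = (cbar / 2) ^ ((d - 1) / 2) eps ^ (-(d - 3) / 2) / sqrt 2,
   which is the claim with c_d = (cbar / 2) ^ ((d - 1) / 2) / (C sqrt 2).
   Minkowski's inequality needs ft and f_m to be measurable.  Both are
   continuous: a neuron x |-> a relu (w^T x~) is (|a| ||w||_1)-Lipschitz, so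
   a Barron function is Lipschitz with constant E_rho [|a| ||w||_1], and
   continuous functions on R^n are Borel. *)

Section NeuronEstimates.
Variable R : realType.

Lemma entry_le_mxnorm m n (M : 'M[R]_(m, n)) i j : `|M i j| <= `|M|.
Proof.
rewrite [leRHS]/Num.Def.normr /= mx_normrE.
by apply/bigmax_geP; right => /=; exists (i, j).
Qed.

Lemma xtilde_entry_lip {d} (x y : 'rV[R]_d) i :
  `|xtilde x ord0 i - xtilde y ord0 i| <= `|x - y|.
Proof.
rewrite /xtilde; case: (split_ordP i) => j ->; last first.
  by rewrite !row_mxEr !mxE subrr normr0.
by rewrite !row_mxEl (_ : x ord0 j - y ord0 j = (x - y) ord0 j) ?entry_le_mxnorm // !mxE.
Qed.

Lemma xtilde_entry_bound {d} (x : 'rV[R]_d) i : `|xtilde x ord0 i| <= `|x| + 1.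
Proof.
rewrite /xtilde; case: (split_ordP i) => j ->; last first.
  by rewrite row_mxEr !mxE normr1 lerDr.
by rewrite row_mxEl (le_trans (entry_le_mxnorm _ _ x ord0 j)) ?lerDl.
Qed.

Lemma norm_dot_le {n} {a b : 'I_n -> R} {M : R} : (forall i, `|b i| <= M) ->
  `|\sum_i a i * b i| <= (\sum_i `|a i|) * M.
Proof.
move=> bM; rewrite mulr_suml; apply: le_trans (ler_norm_sum _ _ _) _.
by apply: ler_sum => i _; rewrite normrM ler_wpM2l.
Qed.

Lemma norm1_ge0 n (w : 'rV[R]_n) : 0 <= norm1 w.
Proof. exact: sumr_ge0. Qed.

Lemma norm1_le_mxnorm n (w : 'rV[R]_n) : norm1 w <= n%:R * `|w|.
Proof.
rewrite /norm1 (le_trans (ler_sum _ (fun i _ => entry_le_mxnorm _ _ w ord0 i))) //.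
by rewrite sumr_const card_ord mulr_natl.
Qed.

Lemma relu_lip (a b : R) : `|relu a - relu b| <= `|a - b|.
Proof.
rewrite /relu; case: (leP a 0) => ha; case: (leP b 0) => hb.
- by rewrite subrr normr0.
- by rewrite sub0r normrN (gtr0_norm hb) ltr0_norm ?subr_lt0 ?(le_lt_trans ha hb) //; lra.
- by rewrite subr0 (gtr0_norm ha) gtr0_norm ?subr_gt0 ?(le_lt_trans hb ha) //; lra.
- by [].
Qed.

Lemma relu_norm_le (a : R) : `|relu a| <= `|a|.
Proof. by have := relu_lip a 0; rewrite {2}/relu maxxx !subr0. Qed.

Lemma wdot_lip_x d w (x y : 'rV[R]_d) :
  `|wdot w x - wdot w y| <= norm1 w * `|x - y|.
Proof.
rewrite /wdot -sumrB; under eq_bigr do rewrite -mulrBr.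
rewrite /norm1; exact: norm_dot_le (xtilde_entry_lip x y).
Qed.

Lemma wdot_bound d w (x : 'rV[R]_d) : `|wdot w x| <= norm1 w * (`|x| + 1).
Proof. rewrite /norm1; exact: norm_dot_le (xtilde_entry_bound x). Qed.

Lemma wdot_lip_w d (u v : 'rV[R]_(d + 1)) (x : 'rV[R]_d) :
  `|wdot u x - wdot v x| <= (d + 1)%:R * (`|x| + 1) * `|u - v|.
Proof.
rewrite /wdot -sumrB; under eq_bigr do rewrite -mulrBl.
rewrite mulrAC; apply: le_trans (norm_dot_le (xtilde_entry_bound x)) _.
rewrite ler_wpM2r ?addr_ge0 //.
apply: le_trans; last exact: norm1_le_mxnorm.
by apply: ler_sum => i _; rewrite !mxE.
Qed.

Lemma neuron_lip d (a : R) w (x y : 'rV[R]_d) :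
  `|a * relu (wdot w x) - a * relu (wdot w y)| <= `|a| * norm1 w * `|x - y|.
Proof.
rewrite -mulrBr normrM -mulrA ler_wpM2l //.
exact: (le_trans (relu_lip _ _) (wdot_lip_x _ _ _ _)).
Qed.

End NeuronEstimates.

Section Measurability.
Variable R : realType.

Lemma lipschitz_continuous (V : normedModType R) (f : V -> R) (K : R) :
  0 <= K -> (forall x y, `|f x - f y| <= K * `|x - y|) -> continuous f.
Proof.
move=> K0 flip x; apply/cvgrPdist_lt => e e0.
have K1 : 0 < K + 1 by rewrite ltr_wpDl.
apply/nbhs_normP; exists (e / (K + 1)); first by rewrite /= divr_gt0.
move=> y /= xy; apply: le_lt_trans (flip x y) _.
have -> : e = e / (K + 1) * (K + 1) by rewrite divfK // gt_eqF.
have := normr_ge0 (x - y); nra.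
Qed.

Lemma continuous_measurable n (f : 'rV[R]_n -> R) :
  continuous f -> measurable_fun (setT : set (Rvec R n)) f.
Proof.
move=> cf; apply: (measurability _ (RGenOpens.measurableE R)).
move=> _ [_ [a [b ->] <-]]; apply: sub_sigma_algebra; rewrite setTI.
exact: (proj1 (continuousP f) cf) (interval_open _ _).
Qed.

Lemma relu_measurable : measurable_fun setT (@relu R).
Proof.
apply: continuous_measurable_fun.
by apply: (@lipschitz_continuous _ _ 1) => // x y; rewrite mul1r relu_lip.
Qed.

Lemma norm1_measurable n : measurable_fun (setT : set (Rvec R n)) (@norm1 R n).
Proof.
apply: continuous_measurable; apply: (@lipschitz_continuous _ _ n%:R) => // u v.
rewrite /norm1 -sumrB; apply: le_trans (ler_norm_sum _ _ _) _.
apply: le_trans; last exact: norm1_le_mxnorm.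
by apply: ler_sum => i _; rewrite !mxE ler_dist_dist.
Qed.

(* A network is Lipschitz with constant sum_i |a_i| ||w_i||_1, hence Borel. *)
Lemma network_measurable d m (a : 'I_m -> R) W :
  measurable_fun (setT : set (Rvec R d)) (network a W).
Proof.
apply: continuous_measurable.
apply: (@lipschitz_continuous _ _ (\sum_i `|a i| * norm1 (W i))).
  by apply: sumr_ge0 => i _; rewrite mulr_ge0 ?norm1_ge0.
move=> x y; rewrite /network -sumrB mulr_suml.
apply: le_trans (ler_norm_sum _ _ _) _.
by apply: ler_sum => i _; apply: neuron_lip.
Qed.

End Measurability.

Section BarronFunctions.
Variables (R : realType) (d : nat).

Let neuron_cost (z : param_space R d) : R := `|z.1| * norm1 z.2.
Let neuron (x : Rvec R d) (z : param_space R d) : R := z.1 * relu (wdot z.2 x).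

Lemma neuron_cost_ge0 z : 0 <= neuron_cost z.
Proof. by rewrite mulr_ge0 ?norm1_ge0. Qed.

Lemma barron_cost_ge0 (rho : probability (param_space R d) R) :
  (0 <= barron_cost rho)%E.
Proof. by apply: integral_ge0 => z _; rewrite lee_fin neuron_cost_ge0. Qed.

Lemma neuron_cost_measurable : measurable_fun setT neuron_cost.
Proof.
apply: measurable_funM.
  exact: measurableT_comp (@normr_measurable _ _) measurable_fst.
exact: measurableT_comp (@norm1_measurable _ _) measurable_snd.
Qed.

Lemma neuron_measurable x : measurable_fun setT (neuron x).
Proof.
have mwdot : measurable_fun setT (fun w : Rvec R (d + 1) => wdot w x).
  apply: continuous_measurable.
  apply: (@lipschitz_continuous _ _ _ ((d + 1)%:R * (`|x| + 1))).
    by rewrite mulr_ge0 ?addr_ge0.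
  by move=> u v; exact: wdot_lip_w.
apply: measurable_funM measurable_fst _.
exact/(measurableT_comp (relu_measurable R))/(measurableT_comp mwdot).
Qed.

Section Representation.
Variable rho : probability (param_space R d) R.

Lemma neuron_cost_integrable : (barron_cost rho < +oo)%E ->
  rho.-integrable setT (EFin \o neuron_cost).
Proof.
move=> finite_cost; apply/integrableP; split.
  by apply/measurable_EFinP; exact: neuron_cost_measurable.
rewrite (_ : (fun z => `|(EFin \o neuron_cost) z|%E) = EFin \o neuron_cost) //.
by apply: funext => z /=; rewrite ger0_norm ?neuron_cost_ge0.
Qed.

(* |a relu (w^T x~)| <= |a| ||w||_1 (|x| + 1), so every neuron is integrable. *)
Lemma neuron_integrable x : (barron_cost rho < +oo)%E ->
  rho.-integrable setT (EFin \o neuron x).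
Proof.
move=> finite_cost; apply: (le_integrable measurableT _ _
  (integrableZr measurableT (`|x| + 1) (neuron_cost_integrable finite_cost))).
  by apply/measurable_EFinP; exact: neuron_measurable.
move=> z _ /=; rewrite lee_fin normrM [X in _ <= X]ger0_norm; last first.
  by rewrite mulr_ge0 ?neuron_cost_ge0 ?addr_ge0.
rewrite -mulrA ler_wpM2l //.
exact: le_trans (relu_norm_le _ _) (wdot_bound _ _ _ _).
Qed.

(* A function represented by rho is Lipschitz with constant E_rho [|a| ||w||_1]:
   integrate the Lipschitz bound of the single neurons. *)
Lemma barron_rep_lipschitz (g : Rvec R d -> R) : barron_rep g rho ->
  forall x y, `|g x - g y| <= fine (barron_cost rho) * `|x - y|.
Proof.
move=> [finite_cost g_rep] x y.
have cost_fin : barron_cost rho = (fine (barron_cost rho))%:E.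
  by rewrite fineK // ge0_fin_numE ?barron_cost_ge0.
rewrite -lee_fin EFinM -cost_fin -abse_EFin EFinB !g_rep.
rewrite -(integralB_EFin measurableT (neuron_integrable x finite_cost)
                                      (neuron_integrable y finite_cost)).
apply: le_trans (le_abse_integral _ measurableT _) _.
  by apply/measurable_EFinP; apply: measurable_funB; exact: neuron_measurable.
rewrite -(integralZr measurableT (neuron_cost_integrable finite_cost)).
apply: ge0_le_integral => //.
- apply/measurable_EFinP; apply: measurableT_comp; first exact: normr_measurable.
  by apply: measurable_funB; exact: neuron_measurable.
- apply/measurable_EFinP; apply: measurable_funM; first exact: neuron_cost_measurable.
  exact: measurable_cst.
- by move=> z _; rewrite -EFinB abse_EFin lee_fin neuron_lip.
Qed.
End Representation.

(* Barron functions are Lipschitz, hence Borel measurable. *)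
Lemma barron_measurable (g : Rvec R d -> R) : is_barron g -> measurable_fun setT g.
Proof.
move=> [rho g_rep]; apply: continuous_measurable.
apply: (@lipschitz_continuous R _ _ (fine (barron_cost rho))).
  exact/fine_ge0/barron_cost_ge0.
exact: barron_rep_lipschitz g_rep.
Qed.

Lemma barron_norm_ge0 (g : Rvec R d -> R) : (0 <= barron_norm g)%E.
Proof. by apply/ereal_infP => _ [rho _ <-]; exact: barron_cost_ge0. Qed.

Lemma barron_norm_fin_num (g : Rvec R d -> R) :
  is_barron g -> barron_norm g \is a fin_num.
Proof.
move=> [rho g_rep]; rewrite ge0_fin_numE ?barron_norm_ge0 //.
by apply: le_lt_trans g_rep.1; apply: ereal_inf_lbound; exists rho.
Qed.

End BarronFunctions.
Arguments barron_measurable {R d g}.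
Arguments barron_norm_fin_num {R d g}.

Lemma L2dist_triangle {R : realType} {d} (P : probability (Rvec R d) R)
    {f g h : Rvec R d -> R} :
  measurable_fun setT f -> measurable_fun setT g -> measurable_fun setT h ->
  (L2dist P f h <= L2dist P f g + L2dist P g h)%E.
Proof.
move=> mf mg mh; rewrite /L2dist.
have -> : (fun x => (f x - h x)%:E) =
    EFin \o ((fun x => f x - g x) \+ (fun x => g x - h x)).
  by apply: funext => x /=; rewrite addrA subrK.
by apply: minkowski_EFin; rewrite ?(ler_nat R 1 2) //; exact: measurable_funB.
Qed.

(* Throughout,
   y = cbar / (2 eps); the width budget y ^ (D - 1) is the largest width at
   which the lower rate of hypothesis (i) still exceeds 2 eps. *)

Lemma width_budget_ge1 (R : realType) (cbar eps D : R) :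
  0 < eps -> 1 <= D -> eps <= cbar / 4 -> 1 <= (cbar / (2 * eps)) `^ (D - 1).
Proof.
move=> eps_gt0 D_ge1 eps_small.
have y_ge1 : 1 <= cbar / (2 * eps) by rewrite ler_pdivlMr ?mulr_gt0 // mul1r; lra.
by rewrite -[leLHS](powRr0 (cbar / (2 * eps))); apply: ler_powR => //; lra.
Qed.

Lemma lower_rate_ge (R : realType) (cbar eps D s : R) :
  0 < cbar -> 0 < eps -> 1 < D -> 0 < s -> s <= (cbar / (2 * eps)) `^ (D - 1) ->
  2 * eps <= cbar * s `^ (- (D - 1)^-1).
Proof.
move=> cbar_gt0 eps_gt0 D_gt1 s_gt0 s_le; set y := cbar / (2 * eps).
have y_gt0 : 0 < y by rewrite divr_gt0 ?mulr_gt0.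
have D1_gt0 : 0 < D - 1 by rewrite subr_gt0.
have root_le : s `^ (D - 1)^-1 <= y.
  have -> : y = (y `^ (D - 1)) `^ (D - 1)^-1.
    by rewrite -powRrM mulfV ?gt_eqF // powRr1 // ltW.
  apply: ge0_ler_powR => //; first by rewrite invr_ge0 ltW.
  - by rewrite nnegrE ltW.
  - by rewrite nnegrE powR_ge0.
have cbar_eq : cbar = 2 * eps * y by rewrite /y mulrC divfK // gt_eqF // mulr_gt0.
rewrite powRN ler_pdivlMr ?powR_gt0 // [leRHS]cbar_eq.
by rewrite ler_wpM2l // mulr_ge0 // ltW.
Qed.

Lemma scaled_sqrt_budget (R : realType) (cbar eps D : R) : 0 < cbar -> 0 < eps ->
  eps * Num.sqrt ((cbar / (2 * eps)) `^ (D - 1)) =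
  (cbar / 2) `^ ((D - 1) / 2) * eps `^ (- ((D - 3) / 2)).
Proof.
move=> cbar_gt0 eps_gt0.
have y_split : cbar / (2 * eps) = (cbar / 2) * eps `^ (-1).
  by rewrite powR_inv1 ?ltW // invfM mulrA.
rewrite -powR12_sqrt ?powR_ge0 // -powRrM y_split powRM ?powR_ge0 ?divr_ge0 ?ltW //.
rewrite -powRrM mulrCA -{1}(powRr1 (ltW eps_gt0)) -powRD; last first.
  by rewrite (gt_eqF eps_gt0) implybT.
by congr (_ * _ `^ _); lra.
Qed.

Lemma barron_norm_lower_bound (R : realType) (cbar eps D C s b : R) :
  0 < cbar -> 0 < eps -> 0 < C -> 1 <= s ->
  (cbar / (2 * eps)) `^ (D - 1) < s + 1 -> eps < C / Num.sqrt s * b ->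
  (cbar / 2) `^ ((D - 1) / 2) / (C * Num.sqrt 2) * eps `^ (- ((D - 3) / 2)) <= b.
Proof.
move=> cbar_gt0 eps_gt0 C_gt0 s_ge1 budget_lt err_gt.
have sqrt_s_gt0 : 0 < Num.sqrt s by rewrite sqrtr_gt0; lra.
have sqrt2_gt0 : 0 < Num.sqrt 2 :> R by rewrite sqrtr_gt0.
have eps_sqrt_lt : eps * Num.sqrt s < C * b.
  by rewrite -ltr_pdivlMr // mulrAC.
have sqrt_budget_le :
    Num.sqrt ((cbar / (2 * eps)) `^ (D - 1)) <= Num.sqrt 2 * Num.sqrt s.
  by rewrite -sqrtrM // ler_sqrt //; lra.
rewrite mulrAC -scaled_sqrt_budget // ler_pdivrMr ?mulr_gt0 //.
have := ler_wpM2l (ltW eps_gt0) sqrt_budget_le; nra.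
Qed.

Lemma gap_lower_bound (R : realType) (eps : R) (u v : \bar R) :
  (0 <= u)%E -> (u < eps%:E)%E -> ((2 * eps)%:E <= u + v)%E -> (eps%:E < v)%E.
Proof.
case: u => [u| |] //; case: v => [v| |] //= _ u_lt; last by rewrite ltry.
by rewrite -EFinD lee_fin !lte_fin in u_lt *; lra.
Qed.

Theorem mainTheorem6 (R : realType) (d : nat) (cbar C : R) :
  (3 <= d)%N -> 0 < cbar -> 0 < C ->
  exists cd : R, 0 < cd /\
  forall (P : probability (Rvec R d) R) (f : Rvec R d -> R),
    inL2 P f ->
    (forall (m : nat) (fm : Rvec R d -> R), (0 < m)%N -> is_network m fm ->
       ((cbar * (m%:R `^ (- (d%:R - 1)^-1)))%:E <= L2dist P f fm)%E) ->
    (forall (g : Rvec R d -> R) (m : nat), is_barron g -> (0 < m)%N ->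
       exists fm : Rvec R d -> R, is_network m fm /\
         (L2dist P g fm <= (C / Num.sqrt m%:R)%:E * barron_norm g)%E) ->
    forall (eps : R) (ft : Rvec R d -> R),
      0 < eps -> eps <= cbar / 4 -> is_barron ft ->
      (L2dist P f ft < eps%:E)%E ->
      ((cd * (eps `^ (- ((d%:R - 3) / 2))))%:E <= barron_norm ft)%E.
Proof.
move=> d_ge3 cbar_gt0 C_gt0.
have D_gt1 : 1 < d%:R :> R by rewrite (ltr_nat R 1 d) (leq_trans _ d_ge3).
exists ((cbar / 2) `^ ((d%:R - 1) / 2) / (C * Num.sqrt 2)); split.
  by rewrite divr_gt0 ?powR_gt0 ?divr_gt0 ?mulr_gt0 ?sqrtr_gt0.
move=> P f [f_meas _] lower upper eps ft eps_gt0 eps_small ft_barron f_close.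
set X := (cbar / (2 * eps)) `^ (d%:R - 1).
have X_ge1 : 1 <= X by apply: width_budget_ge1 => //; exact: ltW.
set m := Num.truncn X.
have m_gt0 : (0 < m)%N by rewrite truncn_gt0.
have m_le : m%:R <= X by rewrite truncn_le (le_trans _ X_ge1).
have X_lt : X < m%:R + 1 by rewrite natr1; exact: truncnS_gt.
have [fm [fm_net fm_err]] := upper ft m ft_barron m_gt0.
have fm_meas : measurable_fun setT fm.
  by case: fm_net => a [W ->]; exact: network_measurable.
have ft_far : (eps%:E < L2dist P ft fm)%E.
  apply: gap_lower_bound (Lnorm_ge0 _ _ _) f_close _.
  apply: le_trans _ (L2dist_triangle P f_meas (barron_measurable ft_barron) fm_meas).
  apply: le_trans _ (lower m fm m_gt0 fm_net); rewrite lee_fin.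
  by apply: lower_rate_ge => //; rewrite ltr0n.
have ft_fin := barron_norm_fin_num ft_barron.
rewrite -(fineK ft_fin) lee_fin.
apply: (@barron_norm_lower_bound R cbar eps _ C m%:R) => //.
  by rewrite (ler_nat R 1 m).
by rewrite -lte_fin EFinM fineK //; exact: lt_le_trans ft_far fm_err.
Qed.
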